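(* Let $t\ge 2q_0+1$ be an integer. For every $s\in H(P_\infty)$ with $s\le t(q+2q_0+1)$ there exists $(a,b,c,d)\in\mathbb{Z}_{\ge0}^4$ with $aq+b(q+q_0)+c(q+2q_0)+d(q+2q_0+1)=s$ and $a+b+c+d\le t$.
   Context: $n\ge2$ is an integer, $q_0=2^n$, $q=2q_0^2$. $H(P_\infty)$ denotes the numerical semigroup generated by $q,\ q+q_0,\ q+2q_0,\ q+2q_0+1$ (this is the Weierstrass semigroup at the point at infinity of the normalization of the Suzuki curve $y^q-y=x^{q_0}(x^q-x)$). *)

From mathcomp Require Import all_boot.
Set Implicit Arguments. Unset Strict Implicit. Unset Printing Implicit Defensive.

Definition q0 (n : nat) : nat := 2 ^ n.
Definition qS (n : nat) : nat := 2 * (q0 n) ^ 2.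

Definition HPinf (n : nat) (s : nat) : Prop :=
  exists a b c d : nat,
    a * qS n + b * (qS n + q0 n) + c * (qS n + 2 * q0 n)
      + d * (qS n + 2 * q0 n + 1) = s.

(* Write [s = Q t + R].  If [s] has a representation of length [m > t] then
   [R >= Q = 2 q0^2].  When [s >= t (Q + 2 q0)], [t] generators from
   {Q + 2 q0, Q + 2 q0 + 1} suffice.  Otherwise [R < 2 q0 t]; dividing
   [R = k q0 + w] with [w < q0 <= k/2] gives [R = q0 (b + 2c + 2d) + d] with
   [d = w], [b + 2c = k - 2w], [b <= 1], and then [b + c + d <= t], so the
   remaining [t - (b + c + d)] generators are taken equal to [Q]. *)

From mathcomp Require Import all_boot zify.

Section Representations.

Variables Q0 Q : nat.

Definition gen_comb (a b c d : nat) : nat :=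
  a * Q + b * (Q + Q0) + c * (Q + 2 * Q0) + d * (Q + 2 * Q0 + 1).

Lemma gen_comb_ge (a b c d : nat) : Q * (a + b + c + d) <= gen_comb a b c d.
Proof. rewrite /gen_comb; nia. Qed.

Lemma gen_comb_top (t e : nat) :
  e <= t -> gen_comb 0 0 (t - e) e = t * (Q + 2 * Q0) + e.
Proof. rewrite /gen_comb; nia. Qed.

Lemma gen_comb_base (t b c d : nat) :
  b + c + d <= t ->
  gen_comb (t - (b + c + d)) b c d = Q * t + (Q0 * (b + 2 * c + 2 * d) + d).
Proof. rewrite /gen_comb; nia. Qed.

Lemma excess_decomp (t R : nat) :
  0 < Q0 -> 2 * Q0 * Q0 <= R -> R < 2 * Q0 * t ->
  exists b c d, Q0 * (b + 2 * c + 2 * d) + d = R /\ b + c + d <= t.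
Proof.
move=> Q0_gt0 R_ge R_lt.
have R_eq := divn_eq R Q0.
have w_lt : R %% Q0 < Q0 by rewrite ltn_mod.
move: R_eq w_lt; move: (R %/ Q0) (R %% Q0) => k w R_eq w_lt.
have k_ge : 2 * Q0 <= k by nia.
have k_lt : k < 2 * t by nia.
have k_split := odd_double_half (k - 2 * w); rewrite -muln2 in k_split.
have b_le := leq_b1 (odd (k - 2 * w)).
exists (odd (k - 2 * w)), (k - 2 * w)./2, w; nia.
Qed.

Lemma short_repr (t s : nat) :
  0 < Q0 -> 2 * Q0 * Q0 <= Q ->
  Q * t.+1 <= s -> s <= t * (Q + 2 * Q0 + 1) ->
  exists a b c d, gen_comb a b c d = s /\ a + b + c + d <= t.
Proof.
move=> Q0_gt0 Q_ge s_ge s_le.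
have [s_top | s_low] := leqP (t * (Q + 2 * Q0)) s.
  exists 0, 0, (t - (s - t * (Q + 2 * Q0))), (s - t * (Q + 2 * Q0)).
  by rewrite gen_comb_top; lia.
have R_ge : 2 * Q0 * Q0 <= s - Q * t by nia.
have R_lt : s - Q * t < 2 * Q0 * t by nia.
have [b [c [d [R_eq bcd_le]]]] := @excess_decomp t _ Q0_gt0 R_ge R_lt.
exists (t - (b + c + d)), b, c, d.
by rewrite gen_comb_base // R_eq; lia.
Qed.

End Representations.

Theorem lemma4p6 (n t s : nat) :
  2 <= n ->
  2 * q0 n + 1 <= t ->
  HPinf n s ->
  s <= t * (qS n + 2 * q0 n + 1) ->
  exists a b c d : nat,
    a * qS n + b * (qS n + q0 n) + c * (qS n + 2 * q0 n)
      + d * (qS n + 2 * q0 n + 1) = s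
    /\ a + b + c + d <= t.
Proof.
move=> _ _ [a [b [c [d s_eq]]]] s_le.
have [len_le | len_gt] := leqP (a + b + c + d) t; first by exists a, b, c, d.
apply: short_repr s_le.
- by rewrite /q0 expn_gt0.
- by rewrite /qS -mulnA mulnn.
- rewrite -s_eq; apply: leq_trans (gen_comb_ge _ _ _ _ _ _).
  by rewrite leq_mul2l len_gt orbT.
Qed.
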